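(* Let $d\in\mathbb{N}$. Let $(X_S,Y_S)\sim\mathcal{N}(\mu_S,\Sigma_S)$ and $(X_T,Y_T)\sim\mathcal{N}(\mu_T,\Sigma_T)$ be $(d+1)$-dimensional Gaussian random vectors (source and target data) with $$\mu_\cdot=\begin{pmatrix}\mu_{\cdot,X}\\ \mu_{\cdot,Y}\end{pmatrix},\qquad \Sigma_\cdot=\begin{pmatrix}\Sigma_{\cdot,X}&\Sigma_{\cdot,XY}\\ \Sigma_{\cdot,YX}&\Sigma_{\cdot,Y}\end{pmatrix},$$ where $\mu_{\cdot,X},\Sigma_{\cdot,XY}\in\mathbb{R}^d$, $\mu_{\cdot,Y},\Sigma_{\cdot,Y}\in\mathbb{R}$, $\Sigma_{\cdot,YX}=\Sigma_{\cdot,XY}^\top$, and $\Sigma_{\cdot,X}\in\mathbb{R}^{d\times d}$ is invertible, for $\cdot\in\{S,T\}$. For $f:\mathbb{R}^d\to\mathbb{R}$ let $\mathcal{L}_S(f)=\mathbb{E}|Y_S-f(X_S)|^2$ and $\mathcal{L}_T(f)=\mathbb{E}|Y_T-f(X_T)|^2$, and let $f_\cdot^*(x)=w_\cdot^\top x+b_\cdot$ with $w_\cdot=\Sigma_{\cdot,X}^{-1}\Sigma_{\cdot,XY}$, $b_\cdot=\mu_{\cdot,Y}-\Sigma_{\cdot,YX}\Sigma_{\cdot,X}^{-1}\mu_{\cdot,X}$ (the minimizers of $\mathcal{L}_\cdot$ over all functions $\mathbb{R}^d\to\mathbb{R}$). Define the regret $\mathcal{R}(S,T):=\mathcal{L}_T(f_S^*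 )-\mathcal{L}_T(f_T^* )$ and the Wasserstein-based transfer risk $\mathcal{C}_W(S,T):=\mathcal{W}_2(\mathbb{P}_{ST},\mathbb{P}_T)^2$, where $\mathbb{P}_{ST}=\mathrm{Law}(f_S^*(X_T))$ and $\mathbb{P}_T=\mathrm{Law}(f_T^*(X_T))$. Then $$\mathcal{C}_W(S,T)\leq\mathcal{R}(S,T).$$
   Context: This is transfer learning with identity input and output transport maps, so the only intermediate model is the pretrained source model $f_S^*$ applied to the target input. $\mathcal{W}_2(\mu,\nu)^2=\inf_{\gamma\in\Pi(\mu,\nu)}\int|x-y|^2\gamma(dx,dy)$ over couplings $\gamma$ of probability measures $\mu,\nu$ on $\mathbb{R}$. *)

From HB Require Import structures.
From mathcomp Require Import all_boot all_order all_algebra.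
From mathcomp Require Import all_classical all_reals all_analysis.
Set Implicit Arguments.
Unset Strict Implicit.
Unset Printing Implicit Defensive.
Import Order.TTheory GRing.Theory Num.Theory.
Import numFieldNormedType.Exports.
Local Open Scope classical_set_scope.
Local Open Scope ring_scope.

Section defs.
Context {R : realType}.

Definition dotv (d : nat) (u v : 'rV[R]_d) : R := \sum_(i < d) u 0 i * v 0 i.

Definition gauss_law (m v : R) : set R -> \bar R :=
  if v <= 0 then (fun A => \d_m A) else normal_prob m (Num.sqrt v).

(* (X, Y) : T -> R^d x R is a (d+1)-dimensional Gaussian random vector with
   mean (muX, muY) and covariance [[SX, SXY^T]; [SXY, SY]] (SXY is stored as a
   row vector, i.e. SXY = Sigma_YX): every linear functional a.X + c Y is a
   (measurable) random variable with law N(a.muX + c muY, (a,c) Sigma (a,c)^T). *)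
Definition is_gaussian_vector d0 (T : measurableType d0) (P : probability T R)
  (d : nat) (X : T -> 'rV[R]_d) (Y : T -> R)
  (muX : 'rV[R]_d) (muY : R) (SX : 'M[R]_d) (SXY : 'rV[R]_d) (SY : R) : Prop :=
  forall (a : 'rV[R]_d) (c : R),
    let Z := fun t => dotv a (X t) + c * Y t in
    let v := (a *m SX *m a^T) 0 0 + 2 * c * dotv a SXY + c ^+ 2 * SY in
    [/\ measurable_fun setT Z, 0 <= v &
        forall A : set R, measurable A ->
          P (Z @^-1` A) = gauss_law (dotv a muX + c * muY) v A].

Definition opt_w (d : nat) (SX : 'M[R]_d) (SXY : 'rV[R]_d) : 'cV[R]_d :=
  invmx SX *m SXY^T.
Definition opt_b (d : nat) (muX : 'rV[R]_d) (muY : R) (SX : 'M[R]_d)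
  (SXY : 'rV[R]_d) : R :=
  muY - (SXY *m invmx SX *m muX^T) 0 0.
Definition opt_pred (d : nat) (muX : 'rV[R]_d) (muY : R) (SX : 'M[R]_d)
  (SXY : 'rV[R]_d) (x : 'rV[R]_d) : R :=
  (x *m opt_w SX SXY) 0 0 + opt_b muX muY SX SXY.

Definition sq_loss d0 (T : measurableType d0) (P : probability T R)
  (d : nat) (X : T -> 'rV[R]_d) (Y : T -> R) (f : 'rV[R]_d -> R) : \bar R :=
  (\int[P]_t ((Y t - f (X t)) ^+ 2)%:E)%E.

Definition coupling (mu nu : set R -> \bar R) (g : probability (R * R)%type R)
  : Prop :=
  (forall A : set R, measurable A -> g (A `*` setT) = mu A) /\
  (forall B : set R, measurable B -> g (setT `*` B) = nu B).

Definition W2sq (mu nu : set R -> \bar R) : \bar R :=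
  ereal_inf [set (\int[g]_z ((z.1 - z.2) ^+ 2)%:E)%E | g in coupling mu nu].

End defs.

(* For an affine predictor f and the optimal target
   predictor g, L_T(f) - L_T(g) = E (f(X_T) - g(X_T))^2: all three quantities
   are second moments of affine functionals of the Gaussian vector (X_T, Y_T),
   i.e. mean^2 + variance * E N(0,1)^2, and g solves the normal equations
   Sigma_X w = Sigma_XY, which makes the cross terms cancel.  The second moment
   of N(m, v) is computed by standardizing; its first-moment term is removed by
   the reflection y -> -y of Lebesgue measure.  Since (f(X_T), g(X_T)) is a
   coupling of the two laws, W_2^2 is at most E (f(X_T) - g(X_T))^2, which is
   the regret. *)

From HB Require Import structures.
From mathcomp Require Import all_boot all_order all_algebra.
From mathcomp Require Import all_classical all_reals all_analysis.
From mathcomp Require Import measurable_realfun normal_distribution.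
From mathcomp Require Import ring lra.
Set Implicit Arguments.
Unset Strict Implicit.
Unset Printing Implicit Defensive.
Import Order.TTheory GRing.Theory Num.Theory.
Import numFieldNormedType.Exports.
Local Open Scope classical_set_scope.
Local Open Scope ring_scope.

Section integral_density.
Context d (T : measurableType d) (R : realType).
Variables (mu nu : {measure set T -> \bar R}) (p : T -> R).
Hypotheses (mp : measurable_fun setT p) (p_ge0 : forall x, 0 <= p x).
Hypothesis nuE : forall A, measurable A -> nu A = (\int[mu]_(x in A) (p x)%:E)%E.
Local Open Scope ereal_scope.
Import HBNNSimple.

Let integral_density_indic (A : set T) : measurable A ->
  \int[nu]_x (\1_A x)%:E = \int[mu]_x ((\1_A x)%:E * (p x)%:E).
Proof.
move=> mA; rewrite integral_indic// setIT nuE// integral_mkcond.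
by apply: eq_integral => x _; rewrite /patch indicE; case: ifPn; rewrite ?mul1e ?mul0e.
Qed.

Let integral_density_nnsfun (f : {nnsfun T >-> R}) :
  \int[nu]_x (f x)%:E = \int[mu]_x ((f x)%:E * (p x)%:E).
Proof.
under [LHS]eq_integral do rewrite fimfunE -fsumEFin//.
rewrite [LHS]ge0_integral_fsum//; last 2 first.
  - by move=> r; apply/measurable_EFinP; apply: measurable_funM.
  - by move=> n x _; rewrite EFinM nnfun_muleindic_ge0.
under [RHS]eq_integral => x _.
  rewrite fimfunE -fsumEFin// ge0_mule_fsuml; last first.
    by move=> r; rewrite EFinM nnfun_muleindic_ge0.
  over.
rewrite [RHS]ge0_integral_fsum//; last 2 first.
  - move=> r; apply: emeasurable_funM; apply/measurable_EFinP => //.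
    exact: measurable_funM.
  - by move=> r x _; rewrite mule_ge0 ?lee_fin// -lee_fin EFinM nnfun_muleindic_ge0.
apply: eq_fsbigr => r; rewrite inE => -[x _ <-].
rewrite integralZl_indic_nnsfun//.
under [RHS]eq_integral do rewrite EFinM -muleA.
rewrite ge0_integralZl// ?integral_density_indic//.
- by apply: emeasurable_funM; apply/measurable_EFinP.
- by move=> y _; rewrite mule_ge0 ?lee_fin.
- by rewrite lee_fin.
Qed.

Lemma ge0_integral_density (f : T -> \bar R) :
  measurable_fun setT f -> (forall x, 0 <= f x) ->
  \int[nu]_x f x = \int[mu]_x (f x * (p x)%:E).
Proof.
move=> mf f_ge0; pose g := nnsfun_approx measurableT mf.
have g_nd x : {homo g^~ x : m n / (m <= n)%N >-> (m <= n)%R}.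
  by move=> m n mn; exact/lefP/nd_nnsfun_approx.
have gf x : (g n x)%:E @[n --> \oo] --> f x by exact: cvg_nnsfun_approx.
transitivity (limn (fun n => \int[nu]_x (g n x)%:E)).
  rewrite -monotone_convergence//=.
  - by apply: eq_integral => x _; apply/esym/cvg_lim => //; exact: gf.
  - by move=> n; exact/measurable_EFinP.
  - by move=> n x _; rewrite lee_fin.
  - by move=> x _ m n mn; rewrite lee_fin; exact: g_nd.
rewrite (congr1 _ (funext (fun n => integral_density_nnsfun (g n)))).
rewrite -monotone_convergence//=.
- apply: eq_integral => x _; apply: cvg_lim => //.
  exact: cvgeMr.
- by move=> n; apply: emeasurable_funM; apply/measurable_EFinP.
- by move=> n x _; rewrite mule_ge0 ?lee_fin.
- by move=> x _ m n mn; rewrite lee_wpmul2r ?lee_fin//; exact: g_nd.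
Qed.

End integral_density.

Section lebesgue_reflection.
Context {R : realType}.
Local Notation mu := (@lebesgue_measure R).
Local Open Scope ereal_scope.

Let ge0_integralT_split (G : R -> R) : measurable_fun setT G ->
  (forall x, (0 <= G x)%R) ->
  \int[mu]_x (G x)%:E =
  \int[mu]_(x in `[0%R, +oo[) (G x)%:E + \int[mu]_(x in `]-oo, 0%R]) (G x)%:E.
Proof.
move=> mG G_ge0.
rewrite -(setUv `[0%R, +oo[) ge0_integral_setU//=; last 3 first.
- by rewrite setUv; exact/measurable_EFinP.
- by move=> x _; rewrite lee_fin.
- exact/disj_setPCl.
rewrite setCitvr integral_itv_bndo_bndc//; last exact/measurable_EFinP/measurable_funTS.
exact: measurableC.
Qed.

Lemma ge0_integralT_oppr (G : R -> R) : continuous G ->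
  (forall x, (0 <= G x)%R) ->
  \int[mu]_x (G x)%:E = \int[mu]_x (G (- x))%:E.
Proof.
move=> cG G_ge0.
have cGN : continuous (G \o -%R).
  by move=> x; apply: continuous_comp; [exact: oppr_continuous | exact: cG].
have flip_half (H : R -> R) : continuous H -> (forall x, (0 <= H x)%R) ->
    \int[mu]_(x in `]-oo, 0%R]) (H x)%:E = \int[mu]_(x in `[0%R, +oo[) (H (- x))%:E.
  move=> cH H_ge0; rewrite -[in LHS]oppr0 ge0_integration_by_substitutionNy//.
  exact: continuous_subspaceT.
rewrite ge0_integralT_split//; last exact: continuous_measurable_fun.
rewrite [X in _ = X]ge0_integralT_split//; last exact: continuous_measurable_fun.
rewrite addeC flip_half//; congr (_ + _).
rewrite (flip_half (G \o -%R))//=.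
by apply: eq_integral => x _; rewrite /= opprK.
Qed.

End lebesgue_reflection.

Section std_normal.
Context {R : realType}.
Local Notation mu := (@lebesgue_measure R).
Local Open Scope ereal_scope.

Lemma sqr_mul_expR_le (y : R) :
  (y ^+ 2 * expR (- (y ^+ 2) / 2) <= 4 * expR (- (y ^+ 2) / 4))%R.
Proof.
set t := (y ^+ 2 / 4)%R.
have -> : (- (y ^+ 2) / 2 = - t + - t)%R by rewrite /t; field.
have -> : (- (y ^+ 2) / 4 = - t)%R by rewrite /t; field.
have -> : (y ^+ 2 = 4 * t)%R by rewrite /t; field.
rewrite expRD mulrA ler_wpM2r ?expR_ge0// expRN -mulrA ler_piMr//.
by rewrite ler_pdivrMr ?expR_gt0// mul1r (le_trans _ (expR_ge1Dx t))// lerDr.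
Qed.

Lemma std_normal_sqr_fin_num :
  \int[mu]_y ((y ^+ 2 * normal_pdf 0 1 y)%:E) \is a fin_num.
Proof.
rewrite ge0_fin_numE; last first.
  by apply: integral_ge0 => y _; rewrite lee_fin mulr_ge0 ?sqr_ge0 ?normal_pdf_ge0.
have s2_neq0 : (Num.sqrt 2 != 0 :> R)%R by rewrite gt_eqF// sqrtr_gt0 ltr0n.
have peak2_gt0 : (0 < normal_peak (Num.sqrt 2 : R))%R by exact: normal_peak_gt0.
pose C : R := (4 * normal_peak 1 / normal_peak (Num.sqrt 2))%R.
apply: (@le_lt_trans _ _ (\int[mu]_y ((C * normal_pdf 0 (Num.sqrt 2) y)%:E))).
  apply: ge0_le_integral => //.
  - by move=> y _; rewrite lee_fin mulr_ge0 ?sqr_ge0 ?normal_pdf_ge0.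
  - apply/measurable_EFinP; apply: measurable_funM; last exact: measurable_normal_pdf.
    exact: measurable_funX.
  - by apply/measurable_EFinP; apply: measurable_funM => //; exact: measurable_normal_pdf.
  move=> y _; rewrite lee_fin /normal_pdf oner_eq0 (negbTE s2_neq0) /normal_fun.
  rewrite !subr0 expr1n sqr_sqrtr ?ler0n// /C.
  have -> : ((2 : R) *+ 2 = 4)%R by lra.
  rewrite mulrCA [leRHS](_ : _ = normal_peak 1 * (4 * expR (- (y ^+ 2) / 4)))%R.
    by rewrite ler_wpM2l ?normal_peak_ge0 ?sqr_mul_expR_le.
  by field; rewrite gt_eqF.
under eq_integral do rewrite EFinM.
rewrite ge0_integralZl_EFin//.
- by rewrite integral_normal_pdf mule1 ltry.
- by move=> y _; rewrite lee_fin normal_pdf_ge0.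
- by apply/measurable_EFinP; exact: measurable_normal_pdf.
- by rewrite /C; apply: divr_ge0; rewrite ?mulr_ge0 ?normal_peak_ge0.
Qed.

(* Its value is 1, but the regret identity holds whatever this constant is. *)
Definition std_normal_moment2 : R := fine (\int[mu]_y ((y ^+ 2 * normal_pdf 0 1 y)%:E)).

Lemma normal_pdf01N (y : R) : normal_pdf 0 1 (- y) = normal_pdf 0 1 y.
Proof. by rewrite /normal_pdf oner_eq0 /normal_fun !subr0 sqrrN. Qed.

Lemma normal_pdf_std (m s y : R) : (0 < s)%R ->
  (normal_pdf m s (m + s * y) * s = normal_pdf 0 1 y)%R.
Proof.
move=> s_gt0; rewrite /normal_pdf gt_eqF// oner_eq0 /normal_fun mulrAC.
have -> : (normal_peak s * s = normal_peak 1)%R.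
  rewrite /normal_peak expr1n mul1r -mulrnAr sqrtrM ?sqr_ge0// sqrtr_sqr gtr0_norm//.
  by rewrite invfM mulrAC mulVf ?gt_eqF// mul1r.
congr (_ * expR _)%R.
by rewrite addrAC subrr add0r !subr0 expr1n exprMn; field; rewrite gt_eqF.
Qed.

Lemma ge0_integral_normal_pdf_std (m s : R) (G : R -> R) : (0 < s)%R ->
  continuous G -> (forall x, 0 <= G x)%R ->
  \int[mu]_x ((G x * normal_pdf m s x)%:E) =
  \int[mu]_y ((G (m + s * y) * normal_pdf 0 1 y)%:E).
Proof.
move=> s_gt0 cG G_ge0.
pose F (y : R^o) : R^o := ((y + m / s) * s)%R.
have FE y : F y = (m + s * y)%R by rewrite /F; field; rewrite gt_eqF.
have F'E : F^`()%classic = cst s.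
  apply/funext => x; rewrite /F derive1E deriveM// deriveD// derive_cst scaler0.
  by rewrite add0r derive_id derive_cst addr0 scaler1.
rewrite (@increasing_ge0_integration_by_substitutionT _ F); rewrite ?F'E.
- apply: eq_integral => y _; congr EFin.
  by rewrite !fctE /= FE -mulrA normal_pdf_std.
- by move=> x y xy; rewrite /F ltr_pM2r// ltrD2r.
- by move=> x; exact: cvg_cst.
- exact: is_cvg_cst.
- exact: is_cvg_cst.
- by move=> x; rewrite /F; apply: derivableM => //; apply: derivableD.
- by apply/gt0_cvgMlNy => //; exact: cvg_addrr_Ny.
- by apply/gt0_cvgMly => //; exact: cvg_addrr.
- move=> x; apply: continuousM; first exact: cG.
  by apply: continuous_normal_pdf; rewrite gt_eqF.
- by move=> x; rewrite mulr_ge0 ?normal_pdf_ge0.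
Qed.

Lemma sqr_affine_continuous (a b : R) : continuous (fun x : R => (a + b * x) ^+ 2)%R.
Proof.
move=> x; apply: (@continuous_comp _ _ _ (fun x => a + b * x)%R (fun z => z ^+ 2)%R).
  by apply: (@continuousD _ _ _ (cst a) ( *%R b)); [exact: cst_continuous | exact: mulrl_continuous].
exact: exprn_continuous.
Qed.

Let measurable_sqr_affine_pdf (c s : R) :
  measurable_fun setT (fun y => ((c + s * y) ^+ 2 * normal_pdf 0 1 y)%:E).
Proof.
apply/measurable_EFinP; apply: measurable_funM; last exact: measurable_normal_pdf.
by apply: measurable_funX; apply: measurable_funD => //; exact: measurable_funM.
Qed.

Let sqr_affine_pdf_ge0 (c s y : R) : (0 <= (c + s * y) ^+ 2 * normal_pdf 0 1 y)%R.
Proof. by rewrite mulr_ge0 ?sqr_ge0 ?normal_pdf_ge0. Qed.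

(* the odd moment cancels in this sum *)
Let integral_std_normal_sqr_affineD (c s : R) :
  \int[mu]_y (((c + s * y) ^+ 2 * normal_pdf 0 1 y)%:E) +
  \int[mu]_y (((- c + s * y) ^+ 2 * normal_pdf 0 1 y)%:E) =
  ((c ^+ 2 + s ^+ 2 * std_normal_moment2) *+ 2)%:E.
Proof.
have m_pdf : measurable_fun setT (fun y : R => (normal_pdf 0 1 y)%:E).
  by apply/measurable_EFinP; exact: measurable_normal_pdf.
have sqr_pdf_ge0 y : (0 <= y ^+ 2 * normal_pdf 0 1 y)%R.
  by rewrite mulr_ge0 ?sqr_ge0 ?normal_pdf_ge0.
have m_sqr_pdf : measurable_fun setT (fun y : R => (y ^+ 2 * normal_pdf 0 1 y)%:E).
  apply/measurable_EFinP; apply: measurable_funM; last exact: measurable_normal_pdf.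
  exact: measurable_funX.
rewrite -ge0_integralD//; last 4 first.
- by move=> y _; rewrite lee_fin.
- exact: measurable_sqr_affine_pdf.
- by move=> y _; rewrite lee_fin.
- exact: measurable_sqr_affine_pdf.
transitivity (\int[mu]_y ((c ^+ 2 *+ 2)%:E * (normal_pdf 0 1 y)%:E +
                         (s ^+ 2 *+ 2)%:E * (y ^+ 2 * normal_pdf 0 1 y)%:E)).
  by apply: eq_integral => y _; rewrite -!EFinM -EFinD; congr EFin; ring.
rewrite ge0_integralD//; last 4 first.
- by move=> y _; rewrite mule_ge0 ?lee_fin ?mulrn_wge0 ?sqr_ge0 ?normal_pdf_ge0.
- exact: measurable_funeM m_pdf.
- by move=> y _; rewrite mule_ge0 ?lee_fin ?mulrn_wge0 ?sqr_ge0 ?sqr_pdf_ge0.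
- exact: measurable_funeM m_sqr_pdf.
rewrite ge0_integralZl_EFin ?mulrn_wge0 ?sqr_ge0//; last first.
  by move=> y _; rewrite lee_fin normal_pdf_ge0.
rewrite ge0_integralZl_EFin ?mulrn_wge0 ?sqr_ge0//; last first.
  by move=> y _; rewrite lee_fin sqr_pdf_ge0.
rewrite integral_normal_pdf mule1 -(fineK std_normal_sqr_fin_num) -EFinM -EFinD.
by congr EFin; rewrite /std_normal_moment2; ring.
Qed.

Lemma integral_std_normal_sqr_affine (c s : R) :
  \int[mu]_y (((c + s * y) ^+ 2 * normal_pdf 0 1 y)%:E) =
  (c ^+ 2 + s ^+ 2 * std_normal_moment2)%:E.
Proof.
have reflectE : \int[mu]_y (((c + s * y) ^+ 2 * normal_pdf 0 1 y)%:E) =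
    \int[mu]_y (((- c + s * y) ^+ 2 * normal_pdf 0 1 y)%:E).
  rewrite ge0_integralT_oppr//; last first.
    move=> y; apply: (@continuousM _ _ (fun y => (c + s * y) ^+ 2)%R (normal_pdf 0 1)).
      exact: sqr_affine_continuous.
    exact: continuous_normal_pdf.
  by apply: eq_integral => y _; rewrite normal_pdf01N; congr EFin; ring.
have := integral_std_normal_sqr_affineD c s; rewrite -reflectE.
by case: (\int[mu]_y _) => [r [rr]| |] //; congr EFin; lra.
Qed.

Lemma integral_normal_prob_sqr (m s k : R) : (0 < s)%R ->
  \int[normal_prob m s]_x ((x + k) ^+ 2)%:E =
  ((m + k) ^+ 2 + s ^+ 2 * std_normal_moment2)%:E.
Proof.
move=> s_gt0.
rewrite (@ge0_integral_density _ _ _ mu _ (normal_pdf m s))//; last 4 first.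
- exact: measurable_normal_pdf.
- exact: normal_pdf_ge0.
- by apply/measurable_EFinP; apply: measurable_funX; exact: measurable_funD.
- by move=> x; rewrite lee_fin sqr_ge0.
under eq_integral do rewrite -EFinM.
have cG : continuous (fun x => (x + k) ^+ 2)%R.
  rewrite (_ : (fun x => _) = (fun x => (k + 1 * x) ^+ 2)%R); last first.
    by apply/funext => x; rewrite mul1r addrC.
  exact: sqr_affine_continuous.
rewrite (@ge0_integral_normal_pdf_std m s (fun x => (x + k) ^+ 2)%R)//; last first.
  by move=> x; rewrite sqr_ge0.
rewrite -integral_std_normal_sqr_affine.
by apply: eq_integral => y _; rewrite addrAC.
Qed.

End std_normal.

Section dotv.
Context {R : realType} {d : nat}.
Implicit Types (u v w : 'rV[R]_d) (S : 'M[R]_d).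

Lemma dotvE u v : dotv u v = (u *m v^T) 0 0.
Proof. by rewrite /dotv mxE; apply: eq_bigr => i _; rewrite mxE. Qed.

Lemma dotvC u v : dotv u v = dotv v u.
Proof. by rewrite /dotv; apply: eq_bigr => i _; rewrite mulrC. Qed.

Lemma dotvNl u v : dotv (- u) v = - dotv u v.
Proof. by rewrite /dotv -sumrN; apply: eq_bigr => i _; rewrite mxE mulNr. Qed.

Lemma dotvBl u v w : dotv (u - v) w = dotv u w - dotv v w.
Proof. by rewrite /dotv -sumrB; apply: eq_bigr => i _; rewrite !mxE mulrBl. Qed.

Lemma dotvNr u v : dotv u (- v) = - dotv u v.
Proof. by rewrite dotvC dotvNl dotvC. Qed.

Lemma dotvBr u v w : dotv u (v - w) = dotv u v - dotv u w.
Proof. by rewrite dotvC dotvBl !(dotvC u). Qed.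

Lemma dotv_mulmx_sym S u v : S^T = S -> dotv (u *m S) v = dotv (v *m S) u.
Proof.
move=> S_sym; rewrite !dotvE -[in LHS](trmxK (u *m S *m v^T)) [in LHS]mxE.
by rewrite !trmx_mul trmxK S_sym mulmxA.
Qed.

Lemma opt_w_trmx_mulmx S (SXY : 'rV[R]_d) : S^T = S -> S \in unitmx ->
  (opt_w S SXY)^T *m S = SXY.
Proof.
by move=> S_sym S_unit; rewrite /opt_w trmx_mul trmxK trmx_inv S_sym mulmxKV.
Qed.

Lemma opt_predE (muX : 'rV[R]_d) muY S SXY x :
  opt_pred muX muY S SXY x = dotv (opt_w S SXY)^T x + opt_b muX muY S SXY.
Proof. by rewrite /opt_pred dotvC dotvE trmxK. Qed.

Lemma opt_bE (muX : 'rV[R]_d) muY S SXY : S^T = S ->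
  opt_b muX muY S SXY = muY - dotv (opt_w S SXY)^T muX.
Proof. by move=> S_sym; rewrite /opt_b dotvE /opt_w trmx_mul trmxK trmx_inv S_sym. Qed.

End dotv.

Lemma integral_gauss_law_sqr {R : realType} d (T : measurableType d) (P : probability T R)
    (Z : T -> R) (m v k : R) :
  measurable_fun setT Z -> (0 <= v)%R ->
  (forall A, measurable A -> P (Z @^-1` A) = gauss_law m v A) ->
  (\int[P]_t ((Z t + k) ^+ 2)%:E = ((m + k) ^+ 2 + v * std_normal_moment2)%:E)%E.
Proof.
move=> mZ v_ge0 lawZ.
(* [normal_prob] lives on the Lebesgue measurable type of [R] *)
pose Z' : T -> measurableTypeR R := Z.
have mZ' : measurable_fun setT Z' := mZ.
have mf : measurable_fun setT (fun x : measurableTypeR R => ((x + k) ^+ 2)%:E).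
  by apply/measurable_EFinP; apply: measurable_funX; exact: measurable_funD.
transitivity (\int[pushforward P Z']_x ((x + k) ^+ 2)%:E)%E.
  by rewrite ge0_integral_pushforward// => x _; rewrite lee_fin sqr_ge0.
move: lawZ; rewrite /gauss_law; case: ifPn => [v_le0 | /negbTE v_nle0] lawZ.
- rewrite (eq_measure_integral (@dirac _ (measurableTypeR R) m R)); last first.
    by move=> A mA _; exact: lawZ.
  have -> : v = 0%R by apply/eqP; rewrite eq_le v_le0.
  by rewrite integral_dirac// diracE mem_set// mul1e mul0r addr0.
- rewrite (eq_measure_integral (normal_prob m (Num.sqrt v))); last first.
    by move=> A mA _; exact: lawZ.
  by rewrite integral_normal_prob_sqr ?sqr_sqrtr// sqrtr_gt0 ltNge v_nle0.
Qed.

Section gaussian_vector.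
Context {R : realType}.

Definition gauss_var d (SX : 'M[R]_d) (SXY : 'rV[R]_d) (SY : R) (a : 'rV[R]_d) (c : R) : R :=
  (a *m SX *m a^T) 0 0 + 2 * c * dotv a SXY + c ^+ 2 * SY.

Section gaussian.
Variables (d0 : measure_display) (T : measurableType d0) (P : probability T R).
Variables (d : nat) (X : T -> 'rV[R]_d) (Y : T -> R).
Variables (muX : 'rV[R]_d) (muY : R) (SX : 'M[R]_d) (SXY : 'rV[R]_d) (SY : R).
Hypothesis XY : is_gaussian_vector P X Y muX muY SX SXY SY.

Lemma gaussian_vector_measurable_affine (a : 'rV[R]_d) (b : R) :
  measurable_fun setT (fun t => dotv a (X t) + b).
Proof.
have [mZ _ _] := XY a 0.
have -> : (fun t => dotv a (X t) + b) = (fun t => dotv a (X t) + 0 * Y t + b).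
  by apply/funext => t; rewrite mul0r addr0.
exact: measurable_funD.
Qed.

Lemma integral_gaussian_vector_sqr (a : 'rV[R]_d) (c k : R) :
  (\int[P]_t ((dotv a (X t) + c * Y t + k) ^+ 2)%:E =
   ((dotv a muX + c * muY + k) ^+ 2 + gauss_var SX SXY SY a c * std_normal_moment2)%:E)%E.
Proof. by have [mZ v_ge0 lawZ] := XY a c; exact: integral_gauss_law_sqr. Qed.

Hypotheses (SX_sym : SX^T = SX) (SX_unit : SX \in unitmx).

Lemma sq_loss_affineB_opt_pred (a : 'rV[R]_d) (b : R) :
  (sq_loss P X Y (fun x => dotv a x + b)%R - sq_loss P X Y (opt_pred muX muY SX SXY) =
   \int[P]_t ((dotv a (X t) + b - opt_pred muX muY SX SXY (X t)) ^+ 2)%:E)%E.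
Proof.
set w := (opt_w SX SXY)^T; set b0 := opt_b muX muY SX SXY.
have predE : opt_pred muX muY SX SXY = fun x => dotv w x + b0.
  by apply/funext => x; rewrite opt_predE.
have lossE a' b' : sq_loss P X Y (fun x => dotv a' x + b') =
    ((dotv (- a') muX + 1 * muY - b') ^+ 2 + gauss_var SX SXY SY (- a') 1 * std_normal_moment2)%:E.
  rewrite -integral_gaussian_vector_sqr; apply: eq_integral => t _.
  by rewrite dotvNl; congr EFin; ring.
have diffE : (\int[P]_t ((dotv a (X t) + b - (dotv w (X t) + b0)) ^+ 2)%:E =
    ((dotv (a - w) muX + 0 * muY + (b - b0)) ^+ 2 +
     gauss_var SX SXY SY (a - w) 0 * std_normal_moment2)%:E)%E.
  rewrite -integral_gaussian_vector_sqr; apply: eq_integral => t _.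
  by rewrite dotvBl; congr EFin; ring.
rewrite predE !lossE diffE -EFinB; congr EFin.
have wS v : dotv (v *m SX) w = dotv v SXY.
  by rewrite dotv_mulmx_sym// opt_w_trmx_mulmx// dotvC.
rewrite /gauss_var -!dotvE !mulNmx mulmxBl !dotvNl !dotvNr !dotvBl !dotvBr !wS.
rewrite [dotv (w *m SX) a]dotv_mulmx_sym// wS /b0 opt_bE// -/w.
ring.
Qed.

End gaussian.
End gaussian_vector.

Lemma W2sq_pushforward_le {R : realType} d (T : measurableType d) (P : probability T R)
    (f g : T -> R) :
  measurable_fun setT f -> measurable_fun setT g ->
  (W2sq (pushforward P f) (pushforward P g) <= \int[P]_t ((f t - g t) ^+ 2)%:E)%E.
Proof.
move=> mf mg; pose phi t := (f t, g t).
have mphi : measurable_fun setT phi by exact: measurable_fun_pair.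
pose phiM : {mfun T >-> (R * R)%type} := HB.pack phi (isMeasurableFun.Build _ _ _ _ phi mphi).
apply: (le_trans (ereal_inf_lbound _)).
  exists (distribution P phiM) => //.
  by split=> A mA; rewrite /distribution /pushforward /=; congr (P _);
    apply/seteqP; split => t /=; [case | move=> ?; split | case | move=> ?; split].
rewrite ge0_integral_distribution//; last by move=> z; rewrite lee_fin sqr_ge0.
apply/measurable_EFinP; apply: measurable_funX.
exact: measurable_funB measurable_fst measurable_snd.
Qed.

Theorem proposition4 (R : realType) (d : nat)
  (dS : measure_display) (TS : measurableType dS) (PS : probability TS R)
  (dT : measure_display) (TT : measurableType dT) (PT : probability TT R)
  (XS : TS -> 'rV[R]_d) (YS : TS -> R) (XT : TT -> 'rV[R]_d) (YT : TT -> R)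
  (muSX muTX : 'rV[R]_d) (muSY muTY : R)
  (SSX STX : 'M[R]_d) (SSXY STXY : 'rV[R]_d) (SSY STY : R) :
  SSX^T = SSX -> STX^T = STX ->
  SSX \in unitmx -> STX \in unitmx ->
  is_gaussian_vector PS XS YS muSX muSY SSX SSXY SSY ->
  is_gaussian_vector PT XT YT muTX muTY STX STXY STY ->
  let fS := opt_pred muSX muSY SSX SSXY in
  let fT := opt_pred muTX muTY STX STXY in
  (W2sq (pushforward PT (fun t => fS (XT t))) (pushforward PT (fun t => fT (XT t)))
   <= sq_loss PT XT YT fS - sq_loss PT XT YT fT)%E.
Proof.
(* only the target data matter: the regret identity holds for every affine predictor *)
move=> _ STX_sym _ STX_unit _ gaussT; cbv zeta.
set a := (opt_w SSX SSXY)^T; set b := opt_b muSX muSY SSX SSXY.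
rewrite (_ : opt_pred muSX muSY SSX SSXY = fun x => dotv a x + b); last first.
  by apply/funext => x; rewrite opt_predE.
rewrite (sq_loss_affineB_opt_pred gaussT)//.
apply: W2sq_pushforward_le; first exact: gaussian_vector_measurable_affine gaussT _ _.
under eq_fun do rewrite opt_predE.
exact: gaussian_vector_measurable_affine gaussT _ _.
Qed.
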